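(* Let $v_1\ge v_2>0$ and $b\in(0,1)$. A strategy profile $(X,Y)$ with $\mathbf{E}(X)=1$ and $\mathbf{E}(Y)=b$ is a Nash equilibrium of the discrete all-pay auction with valuations $v_1,v_2$ if and only if $v_2=2$, $b\in(0,4/v_1]$, $X=U_{\mathrm{O}}^1$ and $Y=(1-b)\delta_0+b\big(\lambda U_{\mathrm{O}}^1+(1-\lambda)U_{\mathrm{E}}^1\big)$ for some $\lambda\in[0,1]$ with $\frac{4}{bv_1}-\frac{2}{b}+1\le\lambda\le\frac{4}{bv_1}-1$. In this case $P^1(X,Y)=\frac{v_1}{2}(2-b)-1$ and $P^2(Y,X)=0$.
   Context: Discrete all-pay auction: two players, 1 and 2, value a prize at $v_1$ and $v_2$ respectively, where $v_1\ge v_2>0$. A (mixed) strategy is a probability distribution on $\mathbb{Z}_{\ge 0}$ with finite mean, identified with a $\mathbb{Z}_{\ge0}$-valued random variable; the two players' choices are independent. If player 1 uses $X$ and player 2 uses $Y$, the expected payoffs are $P^1(X,Y)=v_1\Pr(X>Y)+\frac{v_1}{2}\Pr(X=Y)-\mathbf{E}(X)$ and $P^2(Y,X)=v_2\Pr(Y>X)+\frac{v_2}{2}\Pr(X=Y)-\mathbf{E}(Y)$. A Nash equilibrium of the all-pay auction is a pair $(X,Y)$ with $P^1(X,Y)\ge P^1(X',Y)$ and $P^2(Y,X)\ge P^2(Y',X)$ for all strategies $X',Y'$. $\delta_j$ denotes the point mass at $j$; $\lambda A+(1-\lambda)B$ denotes the mixture of distributions $A$ and $B$. Special distributions: $U_{\mathrm{O}}^1=\delta_1$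 (uniform on $\{1\}$) and $U_{\mathrm{E}}^1$ is the uniform distribution on $\{0,2\}$. *)

From Stdlib Require Import Reals Lra List.
From Coquelicot Require Import Coquelicot.
Open Scope R_scope.

(* A mixed strategy: a probability distribution on Z_{>=0} with finite mean,
   given by its probability mass function. *)
Definition is_strategy (p : nat -> R) : Prop :=
  (forall n, 0 <= p n) /\ is_series p 1 /\ ex_series (fun n => INR n * p n).

Definition mean (p : nat -> R) : R := Series (fun n => INR n * p n).

Definition cdf_lt (q : nat -> R) (i : nat) : R :=
  fold_right Rplus 0 (map q (seq 0 i)).

(* For independent X ~ p, Y ~ q: Pr(X > Y) and Pr(X = Y). *)
Definition prob_gt (p q : nat -> R) : R := Series (fun i => p i * cdf_lt q i).
Definition prob_eq (p q : nat -> R) : R := Series (fun i => p i * q i).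

(* Payoff of a player with valuation v using p against an opponent using q:
   v Pr(X>Y) + v/2 Pr(X=Y) - E(X).  P^1(X,Y) = payoff v1 X Y,
   P^2(Y,X) = payoff v2 Y X (note Pr(Y=X) = Pr(X=Y)). *)
Definition payoff (v : R) (p q : nat -> R) : R :=
  v * prob_gt p q + v / 2 * prob_eq p q - mean p.

Definition nash_eq (v1 v2 : R) (p q : nat -> R) : Prop :=
  (forall p', is_strategy p' -> payoff v1 p' q <= payoff v1 p q) /\
  (forall q', is_strategy q' -> payoff v2 q' p <= payoff v2 q p).

Definition delta (j : nat) : nat -> R := fun n => if Nat.eqb n j then 1 else 0.

Definition U_O1 : nat -> R := delta 1.
Definition U_E1 : nat -> R :=
  fun n => if Nat.eqb n 0 then 1/2 else if Nat.eqb n 2 then 1/2 else 0.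

Definition mix (lam : R) (A B : nat -> R) : nat -> R :=
  fun n => lam * A n + (1 - lam) * B n.

From Stdlib Require Import Reals Lra Lia Classical FunctionalExtensionality List.
From Coquelicot Require Import Coquelicot.
Open Scope R_scope.

(* Write [pure_payoff v q j] for the payoff of the pure bid j
   against q; the payoff of a mixed strategy p is the p-average of these, so p
   is a best response iff no pure bid beats it, and then every bid in the
   support of p earns exactly the equilibrium payoff.  Against itself a
   strategy earns v/2 - E.
   At an equilibrium with E(X) = 1 > b = E(Y): if player 1 bid some k+2 >= 2,
   mean 1 would force an atom at 0; indifference between 0 and k+2, bid k+1
   not being better, and not losing against copying Y give v1 (1 - q0) < 2 <=
   v1 (1 - q0), a contradiction.  Hence X = delta_1.  Against delta_1 the pure
   payoffs are 0, v2/2 - 1, v2 - j (j >= 2); player 2 bids 0 (as b < 1) and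
   some positive bid (as b > 0), which forces v2 = 2 and support {0,1,2}.
   Player 1's conditions then reduce to bid 1 beating bids 0 and 2, i.e. two
   linear inequalities in q(1) that become the bounds on lam = q(1)/b.  The
   converse runs the same computations backwards. *)

Lemma cdf_lt_S (q : nat -> R) (n : nat) : cdf_lt q (S n) = cdf_lt q n + q n.
Proof.
  unfold cdf_lt. rewrite seq_S, map_app, fold_right_app; simpl.
  induction (map q (seq 0 n)) as [|x l IH]; simpl; [ring | rewrite IH; ring].
Qed.

Lemma cdf_lt_sum (q : nat -> R) (n : nat) : cdf_lt q (S n) = sum_f_R0 q n.
Proof.
  induction n as [|n IH]; rewrite cdf_lt_S; [unfold cdf_lt; simpl; ring|].
  rewrite IH; reflexivity.
Qed.

Lemma cdf_lt_mono (q : nat -> R) (m n : nat) :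
  (forall j, 0 <= q j) -> (m <= n)%nat -> cdf_lt q m <= cdf_lt q n.
Proof.
  intros Hq Hmn; induction Hmn as [|n _ IH]; [lra|].
  rewrite cdf_lt_S; specialize (Hq n); lra.
Qed.

Definition support_below (N : nat) (a : nat -> R) : Prop :=
  forall n, (N <= n)%nat -> a n = 0.

Lemma support_below_mono (M N : nat) (a : nat -> R) :
  (M <= N)%nat -> support_below M a -> support_below N a.
Proof. intros HMN Ha n Hn; apply Ha; lia. Qed.

Lemma is_series_support (a : nat -> R) (N : nat) :
  support_below (S N) a -> is_series a (sum_f_R0 a N).
Proof.
  intros Ha. apply is_series_Reals. intros eps Heps. exists N. intros n Hn.
  assert (Hstable : forall k, sum_f_R0 a (N + k) = sum_f_R0 a N).
  { induction k as [|k IH]; [now rewrite Nat.add_0_r|].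
    rewrite Nat.add_succ_r; simpl. rewrite IH, (Ha (S (N + k))) by lia. ring. }
  replace n with (N + (n - N))%nat by lia.
  unfold R_dist. rewrite Hstable, Rminus_diag, Rabs_R0. exact Heps.
Qed.

Lemma series_term_le (a : nat -> R) (l : R) (k : nat) :
  is_series a l -> (forall n, 0 <= a n) -> a k <= l.
Proof.
  intros Hs Ha. apply is_series_Reals in Hs.
  apply Rle_trans with (sum_f_R0 a k); [|apply sum_incr; auto].
  destruct k as [|k]; simpl; [lra|].
  pose proof (cond_pos_sum a k Ha); lra.
Qed.

Lemma series_ge0 (a : nat -> R) (l : R) :
  is_series a l -> (forall n, 0 <= a n) -> 0 <= l.
Proof. intros Hs Ha. apply Rle_trans with (a 0%nat); auto using series_term_le. Qed.

Lemma ex_series_bound (a b : nat -> R) :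
  (forall n, 0 <= a n <= b n) -> ex_series b -> ex_series a.
Proof.
  intros Hab Hb. apply (@ex_series_le R_AbsRing R_CompleteNormedModule a b); auto.
  intros n. change norm with Rabs; simpl. specialize (Hab n).
  rewrite Rabs_pos_eq; lra.
Qed.

Lemma delta_series (a : nat -> R) (k : nat) :
  is_series (fun j => delta k j * a j) (a k).
Proof.
  set (d := fun j => delta k j * a j).
  assert (Hd : forall j, d j = if Nat.eqb j k then a k else 0).
  { intros j; unfold d, delta. destruct (Nat.eqb_spec j k); subst; ring. }
  assert (Hprefix : forall m, (m < k)%nat -> sum_f_R0 d m = 0).
  { induction m as [|m IH]; intros Hm; simpl; [|rewrite IH by lia];
      rewrite Hd; [destruct (Nat.eqb_spec 0 k) | destruct (Nat.eqb_spec (S m) k)];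
      lia || ring. }
  replace (a k) with (sum_f_R0 d k).
  - apply is_series_support. intros n Hn. rewrite Hd.
    destruct (Nat.eqb_spec n k); [lia | reflexivity].
  - destruct k as [|k]; simpl; rewrite Hd, Nat.eqb_refl;
      [reflexivity | rewrite Hprefix by lia; ring].
Qed.

Lemma delta_strategy (k : nat) : is_strategy (delta k).
Proof.
  split; [|split].
  - intros n; unfold delta; destruct (Nat.eqb n k); lra.
  - eapply is_series_ext; [|apply (delta_series (fun _ => 1) k)].
    intros n; simpl; ring.
  - exists (INR k). eapply is_series_ext; [|apply (delta_series INR k)].
    intros n; simpl; ring.
Qed.

Lemma mean_series (p : nat -> R) :
  is_strategy p -> is_series (fun n => INR n * p n) (mean p).
Proof. intros (_ & _ & Hm). now apply Series_correct. Qed.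

Lemma cdf_lt_bounds (q : nat -> R) (n : nat) :
  is_strategy q -> 0 <= cdf_lt q n <= 1.
Proof.
  intros (Hq & Hsum & _). split.
  - pose proof (cdf_lt_mono q 0 n Hq (Nat.le_0_l n)) as H.
    change (cdf_lt q 0) with 0 in H; exact H.
  - destruct n as [|n]; [unfold cdf_lt; simpl; lra|].
    rewrite cdf_lt_sum. apply is_series_Reals in Hsum. now apply sum_incr.
Qed.

Lemma strategy_support3 (p : nat -> R) :
  is_strategy p -> support_below 3 p ->
  p 0%nat + p 1%nat + p 2%nat = 1 /\ p 1%nat + 2 * p 2%nat = mean p.
Proof.
  intros Sp Hp. pose proof Sp as (_ & Hsum & _).
  pose proof (is_series_support p 2 Hp) as Hs.
  assert (Hm : is_series (fun n => INR n * p n) (sum_f_R0 (fun n => INR n * p n) 2)).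
  { apply is_series_support. intros n Hn. rewrite Hp by lia. ring. }
  apply is_series_unique in Hs, Hm. rewrite (is_series_unique _ _ Hsum) in Hs.
  rewrite (is_series_unique _ _ (mean_series p Sp)) in Hm.
  simpl in Hs, Hm. split; lra.
Qed.

(* If [p] puts no mass on 0, every atom bounds the excess of the mean over 1,
   since sum_n (n - 1) p n = mean p - 1 has then only nonnegative terms. *)
Lemma mean_excess_bound (p : nat -> R) (k : nat) :
  is_strategy p -> p 0%nat = 0 -> (INR k - 1) * p k <= mean p - 1.
Proof.
  intros Sp Hp0. pose proof Sp as (Hp & Hsum & _).
  pose proof (is_series_minus _ _ _ _ (mean_series p Sp) Hsum) as Hs.
  apply (series_term_le _ _ k) in Hs.
  - unfold plus, opp in Hs; simpl in Hs. lra.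
  - intros [|n]; unfold plus, opp; cbn -[INR]; [rewrite Hp0; lra|].
    assert (1 <= INR (S n)) by (apply (le_INR 1); lia).
    pose proof (Hp (S n)). nra.
Qed.

Lemma mean_pos_atom (p : nat -> R) :
  is_strategy p -> 0 < mean p -> exists j, (1 <= j)%nat /\ 0 < p j.
Proof.
  intros Sp Hmean. destruct (classic (exists j, (1 <= j)%nat /\ 0 < p j))
    as [|Hnone]; [assumption|exfalso].
  assert (Hzero : forall n, INR n * p n = 0).
  { intros [|n]; [simpl; ring|].
    destruct (Req_dec (p (S n)) 0) as [E|E]; [rewrite E; ring|].
    destruct Sp as (Hp & _). exfalso. apply Hnone. exists (S n).
    split; [lia|]. specialize (Hp (S n)). lra. }
  assert (Hs : is_series (fun n => INR n * p n) 0).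
  { replace 0 with (sum_f_R0 (fun n => INR n * p n) 0) by apply Hzero.
    apply is_series_support. intros n _; apply Hzero. }
  rewrite <- (is_series_unique _ _ Hs), (is_series_unique _ _ (mean_series p Sp)) in Hmean.
  lra.
Qed.

Definition pure_payoff (v : R) (q : nat -> R) (j : nat) : R :=
  v * (cdf_lt q j + q j / 2) - INR j.

Definition best_response (v : R) (p q : nat -> R) : Prop :=
  forall p', is_strategy p' -> payoff v p' q <= payoff v p q.

Lemma payoff_series (v : R) (p q : nat -> R) :
  is_strategy p -> is_strategy q ->
  is_series (fun j => p j * pure_payoff v q j) (payoff v p q).
Proof.
  intros Sp Sq. pose proof Sp as (Hp & Hpsum & _). pose proof Sq as (Hq & Hqsum & _).
  assert (Hgt : ex_series (fun i => p i * cdf_lt q i)).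
  { apply (ex_series_bound _ p); [|now exists 1]. intros n.
    pose proof (Hp n). pose proof (cdf_lt_bounds q n Sq). nra. }
  assert (Heq : ex_series (fun i => p i * q i)).
  { apply (ex_series_bound _ p); [|now exists 1]. intros n.
    pose proof (Hp n). pose proof (Hq n). pose proof (series_term_le q 1 n Hqsum Hq). nra. }
  apply Series_correct, (is_series_scal_l v) in Hgt.
  apply Series_correct, (is_series_scal_l (v / 2)) in Heq.
  pose proof (is_series_minus _ _ _ _ (is_series_plus _ _ _ _ Hgt Heq) (mean_series p Sp))
    as Hs.
  eapply is_series_ext; [|exact Hs]. intros n.
  unfold pure_payoff, plus, opp, scal; simpl; unfold mult; simpl.
  change (@eq R (v * (p n * cdf_lt q n) + v / 2 * (p n * q n) + - (INR n * p n))
                (p n * (v * (cdf_lt q n + q n / 2) - INR n))).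
  field.
Qed.

Lemma payoff_delta (v : R) (q : nat -> R) (k : nat) :
  is_strategy q -> payoff v (delta k) q = pure_payoff v q k.
Proof.
  intros Sq. rewrite <- (is_series_unique _ _ (payoff_series v _ _ (delta_strategy k) Sq)).
  apply is_series_unique, delta_series.
Qed.

Lemma payoff_support3 (v : R) (p q : nat -> R) :
  is_strategy p -> is_strategy q -> support_below 3 p ->
  payoff v p q = p 0%nat * pure_payoff v q 0 + p 1%nat * pure_payoff v q 1
                 + p 2%nat * pure_payoff v q 2.
Proof.
  intros Sp Sq Hp. rewrite <- (is_series_unique _ _ (payoff_series v p q Sp Sq)).
  apply is_series_unique.
  replace (p 0%nat * _ + _ + _) with (sum_f_R0 (fun j => p j * pure_payoff v q j) 2)
    by (simpl; ring).
  apply is_series_support. intros n Hn. rewrite Hp by lia. ring.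
Qed.

(* Against oneself: 2 Pr(X > X') + Pr(X = X') = 1 for i.i.d. X, X', because the
   partial sums of the left side telescope to Pr(X <= n)^2. *)
Lemma payoff_self (v : R) (q : nat -> R) :
  is_strategy q -> payoff v q q = v / 2 - mean q.
Proof.
  intros Sq. pose proof Sq as (Hq & Hqsum & _).
  set (s := fun i => 2 * (q i * cdf_lt q i) + q i * q i).
  assert (Hpartial : forall n, sum_f_R0 s n = cdf_lt q (S n) * cdf_lt q (S n)).
  { induction n as [|n IH]; simpl sum_f_R0; [|rewrite IH];
      unfold s; rewrite !cdf_lt_S; [unfold cdf_lt; simpl|]; ring. }
  assert (Hs : is_series s 1).
  { apply is_series_Reals. apply is_series_Reals in Hqsum.
    intros eps Heps. destruct (CV_mult _ _ _ _ Hqsum Hqsum eps Heps) as [N HN].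
    exists N. intros n Hn. rewrite Hpartial, cdf_lt_sum.
    replace 1 with (1 * 1) by ring. now apply HN. }
  pose proof (is_series_minus _ _ _ _ (is_series_scal_l (v / 2) _ _ Hs) (mean_series q Sq))
    as Hdiff.
  rewrite <- (is_series_unique _ _ (payoff_series v q q Sq Sq)). apply is_series_unique.
  replace (v / 2 - mean q) with (plus (scal (v / 2) 1) (opp (mean q)))
    by (unfold plus, scal, opp; simpl; unfold mult; simpl; ring).
  eapply is_series_ext; [|exact Hdiff]. intros n.
  unfold s, pure_payoff, plus, opp, scal; simpl; unfold mult; simpl.
  change (@eq R (v / 2 * (2 * (q n * cdf_lt q n) + q n * q n) + - (INR n * q n))
                (q n * (v * (cdf_lt q n + q n / 2) - INR n))).
  field.
Qed.

Lemma best_response_iff_pure (v : R) (p q : nat -> R) :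
  is_strategy p -> is_strategy q ->
  best_response v p q <-> forall k, pure_payoff v q k <= payoff v p q.
Proof.
  intros Sp Sq. split.
  - intros Hbr k. rewrite <- payoff_delta by exact Sq. apply Hbr, delta_strategy.
  - intros Hpure p' Sp'. pose proof Sp' as (Hp' & Hsum' & _).
    pose proof (is_series_minus _ _ _ _ (is_series_scal_r (payoff v p q) _ _ Hsum')
                  (payoff_series v p' q Sp' Sq)) as Hs.
    apply series_ge0 in Hs; unfold plus, opp in *; simpl in *; [lra|].
    intros n. specialize (Hpure n). specialize (Hp' n). nra.
Qed.

Lemma best_response_support (v : R) (p q : nat -> R) (k : nat) :
  is_strategy p -> is_strategy q -> best_response v p q ->
  0 < p k -> pure_payoff v q k = payoff v p q.
Proof.
  intros Sp Sq Hbr Hk. pose proof Sp as (Hp & Hsum & _).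
  pose proof (proj1 (best_response_iff_pure v p q Sp Sq) Hbr) as Hpure.
  pose proof (is_series_minus _ _ _ _ (is_series_scal_r (payoff v p q) _ _ Hsum)
                (payoff_series v p q Sp Sq)) as Hs.
  apply (series_term_le _ _ k) in Hs; unfold plus, opp in *; simpl in *.
  - specialize (Hpure k). nra.
  - intros n. specialize (Hpure n). specialize (Hp n). nra.
Qed.

Lemma pure_payoff_beyond_support (v : R) (q : nat -> R) (N n : nat) :
  is_strategy q -> support_below (S N) q -> (N <= n)%nat ->
  pure_payoff v q (S n) = v - INR (S n).
Proof.
  intros (_ & Hsum & _) Hq Hn.
  assert (Hcdf : cdf_lt q (S n) = 1).
  { rewrite cdf_lt_sum, <- (is_series_unique _ _ Hsum). symmetry.
    apply is_series_unique, is_series_support.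
    apply (support_below_mono (S N)); [lia | exact Hq]. }
  unfold pure_payoff. rewrite Hcdf, (Hq (S n)) by lia. field.
Qed.

Lemma INR_SS_ge (k : nat) : 2 <= INR (S (S k)).
Proof. rewrite !S_INR. pose proof (pos_INR k). lra. Qed.

Lemma INR_SSS_ge (k : nat) : 3 <= INR (S (S (S k))).
Proof. rewrite !S_INR. pose proof (pos_INR k). lra. Qed.

Lemma U_O1_support : support_below 2 U_O1.
Proof. intros [|[|n]] Hn; [lia | lia | reflexivity]. Qed.

Lemma pure_payoff_U_O1 (v : R) :
  pure_payoff v U_O1 0 = 0 /\ pure_payoff v U_O1 1 = v / 2 - 1 /\
  forall n, pure_payoff v U_O1 (S (S n)) = v - INR (S (S n)).
Proof.
  split; [|split]; [unfold pure_payoff, U_O1, delta, cdf_lt; simpl; field.. |].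
  intros n. apply (pure_payoff_beyond_support v U_O1 1);
    [apply delta_strategy | exact U_O1_support | lia].
Qed.

Lemma pure_payoff_support3 (v : R) (q : nat -> R) :
  is_strategy q -> support_below 3 q ->
  pure_payoff v q 0 = v * (2 - mean q - q 1%nat) / 4 /\
  pure_payoff v q 1 = v * (1 - mean q / 2) - 1 /\
  pure_payoff v q 2 = v * (1 - (mean q - q 1%nat) / 4) - 2 /\
  forall n, pure_payoff v q (S (S (S n))) = v - INR (S (S (S n))).
Proof.
  intros Sq Hq. destruct (strategy_support3 q Sq Hq) as [Hmass Hmean].
  unfold pure_payoff at 1 2 3, cdf_lt; simpl.
  replace (q 0%nat) with (1 - q 1%nat - q 2%nat) by lra. rewrite <- Hmean.
  split; [|split; [|split]]; [field.. |].
  intros n. apply (pure_payoff_beyond_support v q 2); [exact Sq | exact Hq | lia].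
Qed.

(* Player 1 with mean bid 1 against a mean bid below 1 never bids 2 or more:
   a bid k+2 in the support would force mass at 0 (mean 1), and the two
   indifference conditions at 0 and k+2, together with k+1 not being better
   and the comparison with copying the opponent, are incompatible. *)
Lemma player1_bids_at_most_one (v : R) (p q : nat -> R) :
  is_strategy p -> is_strategy q -> mean p = 1 -> mean q < 1 ->
  best_response v p q -> support_below 2 p.
Proof.
  intros Sp Sq Hmp Hmq Hbr [|[|k]] Hn; try lia.
  pose proof Sp as (Hp & _). pose proof Sq as (Hq & _).
  destruct (Rle_lt_dec (p (S (S k))) 0) as [Hle|Hpk]; [specialize (Hp (S (S k))); lra|].
  exfalso.
  pose proof (INR_SS_ge k) as HK.
  assert (Hp0 : 0 < p 0%nat).
  { destruct (Rle_lt_dec (p 0%nat) 0) as [Hle|]; [|assumption].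
    pose proof (mean_excess_bound p (S (S k)) Sp ltac:(specialize (Hp 0%nat); lra)).
    nra. }
  pose proof (best_response_support v p q 0 Sp Sq Hbr Hp0) as Hbid0.
  pose proof (best_response_support v p q _ Sp Sq Hbr Hpk) as Hbid2.
  pose proof (proj1 (best_response_iff_pure v p q Sp Sq) Hbr (S k)) as Hbid1.
  pose proof (Hbr q Sq) as Hcopy. rewrite payoff_self in Hcopy by exact Sq.
  assert (Hmass : q 0%nat + q (S k) + q (S (S k)) <= 1).
  { pose proof (cdf_lt_bounds q (S (S (S k))) Sq) as Hle1. rewrite 2!cdf_lt_S in Hle1.
    pose proof (cdf_lt_mono q 1 (S k) Hq ltac:(lia)) as Hge0.
    change (cdf_lt q 1) with (q 0%nat + 0) in Hge0. lra. }
  unfold pure_payoff in Hbid0, Hbid1, Hbid2. change (cdf_lt q 0) with 0 in Hbid0.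
  rewrite cdf_lt_S, S_INR in Hbid2. simpl INR in Hbid0.
  pose proof (Hq (S k)). pose proof (Hq (S (S k))).
  destruct (Rle_lt_dec 0 v); nra.
Qed.

Lemma bids_at_most_one_mean_one (p : nat -> R) :
  is_strategy p -> support_below 2 p -> mean p = 1 -> p = U_O1.
Proof.
  intros Sp Hp Hmean. destruct (strategy_support3 p Sp (support_below_mono 2 3 p ltac:(lia) Hp))
    as [Hmass Hm].
  rewrite (Hp 2%nat) in Hmass, Hm by lia.
  apply functional_extensionality. intros [|[|n]]; unfold U_O1, delta; simpl; try lra.
  apply Hp; lia.
Qed.

(* Player 2's best replies to the point mass at 1 with mean in (0,1): the
   payoff is 0 (bid 0 is played), and some positive bid also earns 0, which
   pins the valuation to 2 and excludes bids of 3 or more. *)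
Lemma player2_reply (v : R) (q : nat -> R) :
  is_strategy q -> 0 < mean q < 1 -> best_response v q U_O1 ->
  v = 2 /\ support_below 3 q.
Proof.
  intros Sq Hmean Hbr. pose proof Sq as (Hq & _).
  pose proof (delta_strategy 1) as SO.
  destruct (pure_payoff_U_O1 v) as (F0 & F1 & F2).
  assert (Hq0 : 0 < q 0%nat).
  { destruct (Rle_lt_dec (q 0%nat) 0) as [Hle|]; [|assumption].
    pose proof (mean_excess_bound q 0 Sq ltac:(specialize (Hq 0%nat); lra)) as Hexcess.
    simpl in Hexcess. lra. }
  assert (Hpay : payoff v q U_O1 = 0).
  { rewrite <- (best_response_support v q U_O1 0 Sq SO Hbr Hq0). exact F0. }
  pose proof (proj1 (best_response_iff_pure v q U_O1 Sq SO) Hbr) as Hpure.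
  assert (Hv : v = 2).
  { destruct (mean_pos_atom q Sq (proj1 Hmean)) as ([|[|k]] & Hj & Hqj); [lia| |].
    - pose proof (best_response_support v q U_O1 1 Sq SO Hbr Hqj). lra.
    - pose proof (best_response_support v q U_O1 _ Sq SO Hbr Hqj) as Hk.
      pose proof (Hpure 2%nat) as H2. rewrite F2 in Hk, H2. simpl INR in H2.
      pose proof (INR_SS_ge k). lra. }
  split; [exact Hv|]. intros [|[|[|n]]] Hn; try lia.
  destruct (Rle_lt_dec (q (S (S (S n)))) 0) as [Hle|Hpos]; [specialize (Hq (S (S (S n)))); lra|].
  pose proof (best_response_support v q U_O1 _ Sq SO Hbr Hpos) as Hn3.
  rewrite F2, Hpay, Hv in Hn3.
  pose proof (INR_SSS_ge n). lra.
Qed.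

Lemma player1_best_response_iff (v : R) (q : nat -> R) :
  0 < v -> is_strategy q -> support_below 3 q ->
  best_response v U_O1 q <->
  4 - 2 * v + mean q * v <= q 1%nat * v /\ q 1%nat * v + mean q * v <= 4.
Proof.
  intros Hv Sq Hq. pose proof Sq as (Hq0 & _).
  destruct (pure_payoff_support3 v q Sq Hq) as (F0 & F1 & F2 & F3).
  rewrite (best_response_iff_pure v U_O1 q (delta_strategy 1) Sq).
  unfold U_O1. rewrite payoff_delta, F1 by exact Sq. split.
  - intros Hpure. pose proof (Hpure 0%nat) as H0. pose proof (Hpure 2%nat) as H2.
    rewrite F0 in H0. rewrite F2 in H2. split; nra.
  - intros [Hlow Hhigh] [|[|[|n]]]; [rewrite F0; nra | rewrite F1; lra | rewrite F2; nra|].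
    rewrite F3. pose proof (INR_SSS_ge n).
    pose proof (Hq0 1%nat). nra.
Qed.

Lemma player1_payoff (v : R) (q : nat -> R) :
  is_strategy q -> support_below 3 q -> payoff v U_O1 q = v / 2 * (2 - mean q) - 1.
Proof.
  intros Sq Hq. unfold U_O1. rewrite payoff_delta by exact Sq.
  rewrite (proj1 (proj2 (pure_payoff_support3 v q Sq Hq))). field.
Qed.

Lemma player2_best_response_two (q : nat -> R) :
  is_strategy q -> support_below 3 q ->
  best_response 2 q U_O1 /\ payoff 2 q U_O1 = 0.
Proof.
  intros Sq Hq. pose proof (delta_strategy 1) as SO.
  destruct (pure_payoff_U_O1 2) as (F0 & F1 & F2).
  assert (Hpay : payoff 2 q U_O1 = 0).
  { rewrite (payoff_support3 2 q U_O1 Sq SO Hq), F0, F1, F2. simpl INR. field. }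
  split; [|exact Hpay].
  apply (best_response_iff_pure 2 q U_O1 Sq SO). rewrite Hpay.
  intros [|[|k]]; [lra | lra | rewrite F2].
  pose proof (INR_SS_ge k). lra.
Qed.

Lemma mix_atoms (b lam : R) :
  let m := mix (1 - b) (delta 0) (mix lam U_O1 U_E1) in
  m 0%nat = 1 - b / 2 - b * lam / 2 /\ m 1%nat = b * lam /\
  m 2%nat = b * (1 - lam) / 2 /\ support_below 3 m.
Proof.
  unfold mix, U_O1, U_E1, delta; simpl.
  split; [field | split; [field | split; [field|]]].
  intros [|[|[|n]]] Hn; [lia.. | simpl; ring].
Qed.

Lemma support3_as_mix (q : nat -> R) :
  is_strategy q -> support_below 3 q -> 0 < mean q ->
  q = mix (1 - mean q) (delta 0) (mix (q 1%nat / mean q) U_O1 U_E1).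
Proof.
  intros Sq Hq Hb. destruct (strategy_support3 q Sq Hq) as [Hmass Hmean].
  destruct (mix_atoms (mean q) (q 1%nat / mean q)) as (M0 & M1 & M2 & M3).
  apply functional_extensionality. intros [|[|[|n]]].
  - rewrite M0. field_simplify; lra.
  - rewrite M1. field. lra.
  - rewrite M2. field_simplify; lra.
  - rewrite M3, Hq by lia. reflexivity.
Qed.

(* The bounds on lam in the statement are the player-1 conditions divided by b v. *)
Lemma lam_bounds (v b lam : R) :
  0 < v -> 0 < b ->
  (4 / (b * v) - 2 / b + 1 <= lam <-> 4 - 2 * v + b * v <= b * lam * v) /\
  (lam <= 4 / (b * v) - 1 <-> b * lam * v + b * v <= 4).
Proof.
  intros Hv Hb. assert (Hbv : b * v > 0) by nra.
  replace (4 / (b * v) - 2 / b + 1) with ((4 - 2 * v + b * v) / (b * v)) by (field; lra).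
  replace (4 / (b * v) - 1) with ((4 - b * v) / (b * v)) by (field; lra).
  rewrite Rle_div_l, <- Rle_div_r by exact Hbv.
  replace (lam * (b * v)) with (b * lam * v) by ring.
  split; split; intros; lra.
Qed.

Lemma equilibrium_structure (v1 v2 : R) (p q : nat -> R) :
  is_strategy p -> is_strategy q -> mean p = 1 -> 0 < mean q < 1 ->
  nash_eq v1 v2 p q -> v2 = 2 /\ p = U_O1 /\ support_below 3 q.
Proof.
  intros Sp Sq Hmp Hmq [Hbr1 Hbr2].
  pose proof (player1_bids_at_most_one v1 p q Sp Sq Hmp (proj2 Hmq) Hbr1) as Hp.
  pose proof (bids_at_most_one_mean_one p Sp Hp Hmp) as Ep. subst p.
  destruct (player2_reply v2 q Sq Hmq Hbr2) as [Hv2 Hq].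
  repeat split; assumption.
Qed.

Theorem proposition4 (v1 v2 b : R) (p q : nat -> R) :
  v1 >= v2 -> v2 > 0 -> 0 < b < 1 ->
  is_strategy p -> is_strategy q -> mean p = 1 -> mean q = b ->
  (nash_eq v1 v2 p q <->
     (v2 = 2 /\ 0 < b <= 4 / v1 /\ p = U_O1 /\
      exists lam : R, 0 <= lam <= 1 /\
        4 / (b * v1) - 2 / b + 1 <= lam <= 4 / (b * v1) - 1 /\
        q = mix (1 - b) (delta 0) (mix lam U_O1 U_E1))) /\
  (nash_eq v1 v2 p q ->
     payoff v1 p q = v1 / 2 * (2 - b) - 1 /\ payoff v2 q p = 0).
Proof.
  intros Hv Hv2 Hb Sp Sq Hmp Hmq.
  assert (Hv1 : 0 < v1) by lra.
  assert (Hmq' : 0 < mean q < 1) by (rewrite Hmq; exact Hb).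
  split; [split|].
  - intros Hne. destruct (equilibrium_structure v1 v2 p q Sp Sq Hmp Hmq' Hne) as (-> & -> & Hq).
    destruct (proj1 (player1_best_response_iff v1 q Hv1 Sq Hq) (proj1 Hne)) as [Hlow Hhigh].
    destruct (strategy_support3 q Sq Hq) as [_ Hmean]. pose proof Sq as (Hq0 & _).
    pose proof (support3_as_mix q Sq Hq (proj1 Hmq')) as Eq.
    rewrite Hmq in Hlow, Hhigh, Hmean, Eq.
    destruct (lam_bounds v1 b (q 1%nat / b) Hv1 (proj1 Hb)) as [L1 L2].
    replace (b * (q 1%nat / b)) with (q 1%nat) in L1, L2 by (field; lra).
    pose proof (Hq0 1%nat). pose proof (Hq0 2%nat).
    split; [reflexivity | split; [split; [lra | apply Rle_div_r; nra] | split; [reflexivity|]]].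
    exists (q 1%nat / b). split; [|split; [split; [apply L1 | apply L2]; lra | exact Eq]].
    split; [apply Rdiv_le_0_compat | apply (Rdiv_le_1 _ _ (proj1 Hb))]; lra.
  - intros (-> & _ & -> & lam & _ & [Hl1 Hl2] & ->).
    destruct (mix_atoms b lam) as (_ & M1 & _ & M3).
    destruct (lam_bounds v1 b lam Hv1 (proj1 Hb)) as [L1 L2].
    split; [|apply player2_best_response_two; assumption].
    apply (player1_best_response_iff v1 _ Hv1 Sq M3). rewrite M1, Hmq.
    split; [apply L1 | apply L2]; assumption.
  - intros Hne. destruct (equilibrium_structure v1 v2 p q Sp Sq Hmp Hmq' Hne) as (-> & -> & Hq).
    rewrite (player1_payoff v1 q Sq Hq), Hmq.
    split; [reflexivity | apply player2_best_response_two; assumption].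
Qed.
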